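(* There is a $17$-point code in $\mathrm{SO}(4)$ which is a regular simplex (all pairwise chordal distances between distinct points equal), is universally optimal, and has a symmetry group acting transitively on it. Moreover, there is no regular simplex in $\mathrm{SO}(4)$ with more than $17$ points.
   Context: $\mathrm{SO}(n)$ carries the chordal distance $d_c(U_1,U_2)=\|U_1-U_2\|_F$ (Frobenius norm), coming from the embedding $\mathrm{SO}(n)\subset\mathbb{R}^{n\times n}$. A code is a finite subset; a regular simplex is a code whose distinct points are pairwise equidistant. A function $g:(0,\infty)\to\mathbb{R}$ is completely monotonic if it is smooth and $(-1)^k g^{(k)}\ge 0$ for all $k\ge0$. A code $\mathcal{C}\subset \mathrm{SO}(n)$ is universally optimal if for every completely monotonic $g$ it minimizes the energy $\sum_{x\ne y\in\mathcal{C}} g(d_c(x,y)^2)$ among all codes in $\mathrm{SO}(n)$ of the same size. A symmetry of the code is an isometry of $\mathrm{SO}(4)$ (for $d_c$) mapping the code to itself. *)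

From HB Require Import structures.
From mathcomp Require Import all_boot all_order all_algebra.
From mathcomp Require Import all_classical all_reals all_analysis.
Set Implicit Arguments. Unset Strict Implicit. Unset Printing Implicit Defensive.
Import Order.TTheory GRing.Theory Num.Theory.
Local Open Scope ring_scope.

Section Defs.
Variable R : realType.

Definition inSO (n : nat) (U : 'M[R]_n) : Prop :=
  U^T *m U = 1%:M /\ \det U = 1.

Definition chordal2 (n : nat) (U V : 'M[R]_n) : R :=
  \sum_(i < n) \sum_(j < n) (U i j - V i j) ^+ 2.
Definition chordal (n : nat) (U V : 'M[R]_n) : R := Num.sqrt (chordal2 U V).

Definition is_code (n : nat) (C : seq 'M[R]_n) : Prop :=
  uniq C /\ forall x, x \in C -> inSO x.

Definition regular_simplex (n : nat) (C : seq 'M[R]_n) : Prop :=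
  exists c : R, forall x y, x \in C -> y \in C -> x != y -> chordal x y = c.

Definition completely_monotonic (g : R -> R) : Prop :=
  forall (k : nat) (x : R), 0 < x ->
    derivable (derive1n k g) x 1 /\ 0 <= (-1) ^+ k * derive1n k g x.

Definition energy (n : nat) (g : R -> R) (C : seq 'M[R]_n) : R :=
  \sum_(x <- C) \sum_(y <- C | x != y) g (chordal x y ^+ 2).

Definition universally_optimal (n : nat) (C : seq 'M[R]_n) : Prop :=
  forall g : R -> R, completely_monotonic g ->
  forall C' : seq 'M[R]_n, is_code C' -> size C' = size C ->
    energy g C <= energy g C'.

Definition isometry_SO (n : nat) (f : 'M[R]_n -> 'M[R]_n) : Prop :=
  (forall x, inSO x -> inSO (f x)) /\
  (forall x y, inSO x -> inSO y -> chordal (f x) (f y) = chordal x y) /\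
  (forall y, inSO y -> exists2 x, inSO x & f x = y).

Definition symmetry (n : nat) (C : seq 'M[R]_n) (f : 'M[R]_n -> 'M[R]_n) : Prop :=
  isometry_SO f /\ (forall x, x \in C -> f x \in C) /\ (forall y, y \in C -> exists2 x, x \in C & f x = y).

Definition transitive_symmetry (n : nat) (C : seq 'M[R]_n) : Prop :=
  forall x y, x \in C -> y \in C -> exists f, symmetry C f /\ f x = y.

End Defs.

From HB Require Import structures.
From mathcomp Require Import all_boot all_order all_algebra.
From mathcomp Require Import all_classical all_reals all_analysis.
From mathcomp Require Import ring lra zify.
Import Order.TTheory GRing.Theory Num.Theory.
Import numFieldNormedType.Exports.
Local Open Scope classical_set_scope.
Local Open Scope ring_scope.

(* With <x, y> the Frobenius inner product, every U in SO(n) has <U, U> = n, so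
   d_c(U, V)^2 = 2n - 2 <U, V> and, over the ordered pairs of an N-point code, the sum of
   the d_c^2 is 2n N^2 - 2 |sum of the code|^2 <= 2n N^2.  A completely monotonic g is
   convex and nonincreasing, so its tangent line at a = 2nN/(N-1) bounds the energy of
   every N-point code below by N(N-1) g(a), with equality for a regular simplex of squared
   side a.  In SO(4) such a simplex with 17 points is the orbit of the identity under the
   torus t |-> (R(4t, 5t), R(t, 3t)) acting by left and right multiplication, sampled at
   t = 2 pi k / 17: there <U, V> = (cos 4t + cos 5t)(cos t + cos 3t) = -1/4 by a telescoping
   sum of cosines, and the torus translations are transitive symmetries.  Conversely, the
   differences x_i - x_0 of a regular simplex have Gram matrix a multiple of I + J, which
   is invertible, so there are at most dim R^(4x4) = 16 of them. *)

Section CompletelyMonotonic.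
Context {R : realType} {g : R -> R}.
Hypothesis gcm : completely_monotonic g.

Lemma completely_monotonic_derive1_le0 x : 0 < x -> derive1 g x <= 0.
Proof. by move=> x0; have := (gcm 1%N x x0).2; rewrite expr1 mulN1r oppr_ge0. Qed.

Lemma completely_monotonic_derive1_ndecr x y : 0 < x -> x <= y ->
  derive1 g x <= derive1 g y.
Proof.
move=> x0 xy.
have pos z : z \in `]x, y[ -> 0 < z.
  by rewrite in_itv /= => /andP[xz _]; exact: lt_trans xz.
apply: (@ger0_derive1_ndecr _ _ x y) => //.
- by move=> z /pos z0; exact: (gcm 1%N z z0).1.
- by move=> z /pos z0; have := (gcm 2%N z z0).2; rewrite expr2 mulrNN !mul1r.
- apply: derivable_within_continuous => z; rewrite in_itv /= => /andP[xz _].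
  exact: (gcm 1%N z (lt_le_trans x0 xz)).1.
Qed.

Lemma completely_monotonic_tangent_le a x : 0 < a -> 0 < x ->
  g a + derive1 g a * (x - a) <= g x.
Proof.
move=> a0 x0.
have g_cont (u v : R) : 0 < u -> {within [set` `[u, v]], continuous g}.
  move=> u0; apply: derivable_within_continuous => z.
  by rewrite in_itv /= => /andP[uz _]; exact: (gcm 0%N z (lt_le_trans u0 uz)).1.
have g_derive (u v : R) : 0 < u -> forall z : R, z \in `]u, v[ -> is_derive z 1 g (derive1 g z).
  move=> u0 z; rewrite in_itv /= => /andP[uz _]; rewrite derive1E.
  by apply: derivableP; exact: (gcm 0%N z (lt_trans u0 uz)).1.
case: (ltgtP a x) => [ax|xa|<-]; last by rewrite subrr mulr0 addr0.
- have [c /andP[ac _] gxa] := MVT ax (g_derive a x a0) (g_cont a x a0).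
  rewrite -lerBrDl gxa; apply: ler_wpM2r; first by rewrite subr_ge0 ltW.
  exact: completely_monotonic_derive1_ndecr (ltW ac).
- have [c /andP[xc ca] gax] := MVT xa (g_derive x a x0) (g_cont x a x0).
  have : derive1 g c * (a - x) <= derive1 g a * (a - x).
    apply: ler_wpM2r; first by rewrite subr_ge0 ltW.
    exact: completely_monotonic_derive1_ndecr (lt_trans x0 xc) (ltW ca).
  rewrite -gax; lra.
Qed.

End CompletelyMonotonic.

Lemma sumr_const_seq (V : nmodType) (T : Type) (s : seq T) (P : pred T) (c : V) :
  \sum_(x <- s | P x) c = c *+ count P s.
Proof. by rewrite big_const_seq iter_addr addr0. Qed.

Lemma sumr_distinct_pairs_const (V : nmodType) (T : eqType) (s : seq T) (c : V) :
  uniq s -> \sum_(x <- s) \sum_(y <- s | x != y) c = c *+ (size s).-1 *+ size s.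
Proof.
move=> us; rewrite big_seq (eq_bigr (fun=> c *+ (size s).-1)) => [|x xs].
  by rewrite -big_seq sumr_const_seq count_predT.
rewrite sumr_const_seq -(count_predC (pred1 x) s) count_uniq_mem // xs add1n /=.
by congr (_ *+ _); apply: eq_count => y /=; rewrite eq_sym.
Qed.

Section Frobenius.
Context {R : realType} {n : nat}.
Implicit Types x y z A B : 'M[R]_n.

Definition frob x y : R := \sum_(i < n) \sum_(j < n) x i j * y i j.

Lemma frobC x y : frob x y = frob y x.
Proof. by apply: eq_bigr => i _; apply: eq_bigr => j _; rewrite mulrC. Qed.

Lemma frob_ge0 x : 0 <= frob x x.
Proof. by apply: sumr_ge0 => i _; apply: sumr_ge0 => j _; rewrite -expr2 sqr_ge0. Qed.

Lemma frob_tr x y : frob x y = \tr (x^T *m y).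
Proof.
rewrite /frob /mxtrace exchange_big /=; apply: eq_bigr => j _.
by rewrite mxE; apply: eq_bigr => i _; rewrite mxE.
Qed.

Lemma frob1 x : frob 1%:M x = \tr x.
Proof. by rewrite frob_tr trmx1 mul1mx. Qed.

Lemma frob_suml (I : Type) (r : seq I) (F : I -> 'M[R]_n) y :
  frob (\sum_(k <- r) F k) y = \sum_(k <- r) frob (F k) y.
Proof.
rewrite /frob; under eq_bigr => i _ do under eq_bigr => j _ do rewrite summxE mulr_suml.
by under eq_bigr => i _ do rewrite exchange_big; rewrite exchange_big.
Qed.

Lemma frob_sumr (I : Type) (r : seq I) (F : I -> 'M[R]_n) x :
  frob x (\sum_(k <- r) F k) = \sum_(k <- r) frob x (F k).
Proof. by rewrite frobC frob_suml; apply: eq_bigr => k _; rewrite frobC. Qed.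

Lemma frob_mxvec x y : \sum_(k < n * n) mxvec x 0 k * mxvec y 0 k = frob x y.
Proof.
rewrite (reindex (uncurry (@mxvec_index n n))); last exact: curry_mxvec_bij.
by rewrite /frob pair_big /=; apply: eq_bigr => -[i j] _ /=; rewrite !mxvecE.
Qed.

Lemma chordal2_frob x y : chordal2 x y = frob x x + frob y y - 2 * frob x y.
Proof.
rewrite /chordal2 /frob mulr_sumr -!big_split -sumrB /=; apply: eq_bigr => i _.
rewrite mulr_sumr -!big_split -sumrB /=; apply: eq_bigr => j _; ring.
Qed.

Lemma chordal2_ge0 x y : 0 <= chordal2 x y.
Proof. by apply: sumr_ge0 => i _; apply: sumr_ge0 => j _; exact: sqr_ge0. Qed.

Lemma chordal_sqr x y : chordal x y ^+ 2 = chordal2 x y.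
Proof. by rewrite sqr_sqrtr // chordal2_ge0. Qed.

Lemma chordal2_eq0 x y : (chordal2 x y == 0) = (x == y).
Proof.
apply/idP/eqP => [/eqP d0|->]; last first.
  by apply/eqP/big1 => i _; apply: big1 => j _; rewrite subrr expr0n.
apply/matrixP => i j; apply/eqP; rewrite -subr_eq0 -sqrf_eq0; apply/eqP.
have row0 : \sum_(l < n) (x i l - y i l) ^+ 2 = 0.
  by apply: (psumr_eq0P _ d0) => // k _; apply: sumr_ge0 => l _; exact: sqr_ge0.
by apply: (psumr_eq0P _ row0) => // l _; exact: sqr_ge0.
Qed.

Lemma chordal2xx x : chordal2 x x = 0.
Proof. by apply/eqP; rewrite chordal2_eq0. Qed.

Lemma chordal2_gt0 x y : x != y -> 0 < chordal2 x y.
Proof. by rewrite lt_def chordal2_ge0 andbT chordal2_eq0. Qed.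

Lemma frobB_polar x y z :
  frob (x - z) (y - z) = (chordal2 x z + chordal2 y z - chordal2 x y) / 2.
Proof.
rewrite /frob /chordal2 -!big_split -sumrB mulr_suml /=; apply: eq_bigr => i _.
by rewrite -!big_split -sumrB mulr_suml /=; apply: eq_bigr => j _; rewrite !mxE; field.
Qed.

Lemma frob_SO x : inSO x -> frob x x = n%:R.
Proof. by case=> xTx _; rewrite frob_tr xTx mxtrace1. Qed.

Lemma inSO_mul A B : inSO A -> inSO B -> inSO (A *m B).
Proof.
move=> [AtA dA] [BtB dB]; split; last by rewrite det_mulmx dA dB mulr1.
by rewrite trmx_mul mulmxA -(mulmxA B^T) AtA mulmx1 BtB.
Qed.

Lemma inSO_tr A : inSO A -> inSO A^T.
Proof. by case=> AtA dA; split; [rewrite trmxK; exact: mulmx1C | rewrite det_tr]. Qed.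

Lemma orthogonal_sqr_SO A : A^T *m A = 1%:M -> inSO (A *m A).
Proof.
move=> AtA; split; first by rewrite trmx_mul mulmxA -(mulmxA A^T) AtA mulmx1 AtA.
by rewrite det_mulmx -{1}det_tr -det_mulmx AtA det1.
Qed.

Lemma frob_mulmx_SO A B x y : inSO A -> inSO B ->
  frob (A *m x *m B) (A *m y *m B) = frob x y.
Proof.
move=> [AtA _] [BtB _]; rewrite !frob_tr !trmx_mul -!mulmxA (mulmxA A^T) AtA mul1mx.
by rewrite mxtrace_mulC -!mulmxA (mulmx1C BtB) mulmx1.
Qed.

Lemma isometry_SO_mulmx A B : inSO A -> inSO B -> isometry_SO (fun x => A *m x *m B).
Proof.
move=> hA hB; split; [|split].
- by move=> x hx; apply: inSO_mul => //; exact: inSO_mul.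
- by move=> x y _ _; rewrite /chordal !chordal2_frob !frob_mulmx_SO.
- move=> y hy; exists (A^T *m y *m B^T).
    by apply: inSO_mul; [apply: inSO_mul => // |]; exact: inSO_tr.
  by rewrite !mulmxA (mulmx1C hA.1) mul1mx -mulmxA hB.1 mulmx1.
Qed.

Lemma sum_chordal2_SO_le (C : seq 'M[R]_n) : (forall x, x \in C -> inSO x) ->
  \sum_(x <- C) \sum_(y <- C | x != y) chordal2 x y <= 2 * n%:R * (size C)%:R ^+ 2.
Proof.
move=> CSO.
have -> : \sum_(x <- C) \sum_(y <- C | x != y) chordal2 x y =
    \sum_(x <- C) \sum_(y <- C) (2 * n%:R - 2 * frob x y).
  rewrite big_seq [RHS]big_seq; apply: eq_bigr => x xC.
  rewrite big_mkcond /= big_seq [RHS]big_seq; apply: eq_bigr => y yC.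
  have [<-|_] := eqVneq x y; first by rewrite (frob_SO _ (CSO _ xC)); ring.
  by rewrite chordal2_frob (frob_SO _ (CSO _ xC)) (frob_SO _ (CSO _ yC)); ring.
have sum_frob : \sum_(x <- C) \sum_(y <- C) frob x y =
    frob (\sum_(x <- C) x) (\sum_(x <- C) x).
  by rewrite frob_suml; apply: eq_bigr => x _; rewrite frob_sumr.
rewrite (eq_bigr (fun x => 2 * n%:R *+ size C - 2 * \sum_(y <- C) frob x y)); last first.
  by move=> x _; rewrite sumrB sumr_const_seq count_predT -mulr_sumr.
rewrite sumrB sumr_const_seq count_predT -mulr_sumr sum_frob -mulrnA.
rewrite -[_ *+ (_ * _)]mulr_natr natrM.
have := frob_ge0 (\sum_(x <- C) x); lra.
Qed.

Lemma regular_simplex_universally_optimal (C : seq 'M[R]_n) (a : R) :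
  uniq C -> 0 < a -> a * (size C).-1%:R = 2 * n%:R * (size C)%:R ->
  (forall x y, x \in C -> y \in C -> x != y -> chordal2 x y = a) ->
  universally_optimal C.
Proof.
move=> uC a0 a_def dC g gcm C' [uC' C'SO] sizeC'.
have energyC : energy g C = g a *+ (size C).-1 *+ size C.
  rewrite /energy -sumr_distinct_pairs_const // !big_seq; apply: eq_bigr => x xC.
  by rewrite big_seq_cond [RHS]big_seq_cond; apply: eq_bigr => y /andP[yC xy]; rewrite chordal_sqr dC.
have tangent : \sum_(x <- C') \sum_(y <- C' | x != y)
    (g a - derive1 g a * a + derive1 g a * chordal2 x y) <= energy g C'.
  apply: ler_sum => x _; apply: ler_sum => y xy; rewrite chordal_sqr.
  have := completely_monotonic_tangent_le gcm _ _ a0 (chordal2_gt0 _ _ xy); lra.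
rewrite energyC; apply: le_trans tangent.
set d := derive1 g a; set T := \sum_(x <- C') \sum_(y <- C' | x != y) chordal2 x y.
rewrite (_ : \sum_(x <- C') _ = \sum_(x <- C') \sum_(y <- C' | x != y) (g a - d * a) + d * T);
  last first.
  rewrite mulr_sumr -big_split /=; apply: eq_bigr => x _.
  by rewrite mulr_sumr -big_split.
rewrite sumr_distinct_pairs_const // sizeC' -!mulrnA.
rewrite -[g a *+ _]mulr_natr -[(g a - d * a) *+ _]mulr_natr natrM.
have := ler_wnM2l (completely_monotonic_derive1_le0 gcm _ a0) (sum_chordal2_SO_le _ C'SO).
rewrite sizeC' expr2 mulrA -a_def -/d -/T !mulrA => daMN_le.
by rewrite mulrBl mulrBl -addrA lerDl addrC subr_ge0.
Qed.

End Frobenius.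

Lemma unitmx_1_add_const (F : numFieldType) (m : nat) :
  (1%:M + const_mx 1 : 'M[F]_m) \in unitmx.
Proof.
set J : 'M[F]_m := const_mx 1.
have JJ : J *m J = m%:R *: J.
  apply/matrixP => i j; rewrite !mxE (eq_bigr (fun=> 1)) ?sumr_const ?card_ord ?mulr1 //.
  by move=> k _; rewrite !mxE mulr1.
have m1 : m%:R + 1 != 0 :> F by rewrite -mulrSr pnatr_eq0.
suff /mulmx1_unit[] : (1%:M + J) *m (1%:M - (m%:R + 1)^-1 *: J) = 1%:M by [].
rewrite mulmxDl !mulmxBr !mul1mx mulmx1 -scalemxAr JJ scalerA.
by apply/matrixP => i j; rewrite !mxE; field.
Qed.

Lemma regular_simplex_size_le {R : realType} {n : nat} (C : seq 'M[R]_n) :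
  uniq C -> regular_simplex C -> (size C <= (n * n).+1)%N.
Proof.
move=> uC [c dC]; have [C_le1|C_gt1] := leqP (size C) 1; first exact: leq_trans C_le1 _.
have C_gt0 := ltnW C_gt1.
pose x i := nth 0 C i; pose m := (size C).-1.
have d2 i j : (i < size C)%N -> (j < size C)%N -> i != j -> chordal2 (x i) (x j) = c ^+ 2.
  by move=> iC jC ij; rewrite -chordal_sqr dC ?mem_nth // nth_uniq.
have c2_neq0 : c ^+ 2 != 0 by rewrite -(d2 0 1)%N ?chordal2_eq0 ?nth_uniq.
pose V : 'M[R]_(m, n * n) := \matrix_(i < m) mxvec (x i.+1 - x 0%N).
have ltS (i : 'I_m) : (i.+1 < size C)%N by rewrite -ltn_predRL.
have gram : V *m V^T = (c ^+ 2 / 2) *: (1%:M + const_mx 1).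
  apply/matrixP => i j; rewrite !mxE.
  rewrite (eq_bigr (fun k => mxvec (x i.+1 - x 0%N) 0 k * mxvec (x j.+1 - x 0%N) 0 k));
    last by move=> k _; rewrite !mxE.
  rewrite frob_mxvec frobB_polar (d2 _ 0%N (ltS i)) // (d2 _ 0%N (ltS j)) //.
  have [<-|ij] := eqVneq i j; first by rewrite chordal2xx /=; field.
  by rewrite (d2 _ _ (ltS i) (ltS j)) //=; field.
have : V *m V^T \in unitmx.
  by rewrite gram unitmxZ ?unitmx_1_add_const // unitfE mulf_neq0 // invr_eq0 pnatr_eq0.
move/mxrank_unit => rankG.
have := leq_trans (mxrankM_maxl V V^T) (rank_leq_col V).
by rewrite rankG -(prednK C_gt0) ltnS.
Qed.

Section TorusCode.
Context {R : realType}.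
Implicit Types (u v w s t h : R) (x y : 'M[R]_4).

Definition rot01_23 u v : 'M[R]_4 := \matrix_(i < 4, j < 4)
  match (i : nat), (j : nat) with
  | 0, 0 => cos u | 0, 1 => - sin u | 1, 0 => sin u | 1, 1 => cos u
  | 2, 2 => cos v | 2, 3 => - sin v | 3, 2 => sin v | 3, 3 => cos v
  | _, _ => 0 end.

Definition rot02_13 u v : 'M[R]_4 := \matrix_(i < 4, j < 4)
  match (i : nat), (j : nat) with
  | 0, 0 => cos u | 0, 2 => - sin u | 2, 0 => sin u | 2, 2 => cos u
  | 1, 1 => cos v | 1, 3 => - sin v | 3, 1 => sin v | 3, 3 => cos v
  | _, _ => 0 end.

Ltac mx4_entrywise := apply/matrixP;
  case=> [[|[|[|[|?]]]] ?] //; case=> [[|[|[|[|?]]]] ?] //;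
  rewrite !mxE ?big_ord_recl ?big_ord0 /= ?mxE /=.

Lemma rot01_23M u v u' v' : rot01_23 u v *m rot01_23 u' v' = rot01_23 (u + u') (v + v').
Proof. by mx4_entrywise; rewrite ?cosD ?sinD; ring. Qed.

Lemma rot02_13M u v u' v' : rot02_13 u v *m rot02_13 u' v' = rot02_13 (u + u') (v + v').
Proof. by mx4_entrywise; rewrite ?cosD ?sinD; ring. Qed.

Lemma rot01_23_tr u v : (rot01_23 u v)^T = rot01_23 (- u) (- v).
Proof. by mx4_entrywise; rewrite ?cosN ?sinN; ring. Qed.

Lemma rot02_13_tr u v : (rot02_13 u v)^T = rot02_13 (- u) (- v).
Proof. by mx4_entrywise; rewrite ?cosN ?sinN; ring. Qed.

Lemma rot01_23_0 : rot01_23 0 0 = 1%:M.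
Proof. by mx4_entrywise; rewrite ?cos0 ?sin0; ring. Qed.

Lemma rot02_13_0 : rot02_13 0 0 = 1%:M.
Proof. by mx4_entrywise; rewrite ?cos0 ?sin0; ring. Qed.

Lemma rot01_23_SO u v : inSO (rot01_23 u v).
Proof.
have -> : rot01_23 u v = rot01_23 (u / 2) (v / 2) *m rot01_23 (u / 2) (v / 2).
  by rewrite rot01_23M -!splitr.
by apply: orthogonal_sqr_SO; rewrite rot01_23_tr rot01_23M !addNr rot01_23_0.
Qed.

Lemma rot02_13_SO u v : inSO (rot02_13 u v).
Proof.
have -> : rot02_13 u v = rot02_13 (u / 2) (v / 2) *m rot02_13 (u / 2) (v / 2).
  by rewrite rot02_13M -!splitr.
by apply: orthogonal_sqr_SO; rewrite rot02_13_tr rot02_13M !addNr rot02_13_0.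
Qed.

Lemma mxtrace_rot01_23_rot02_13 u v w t :
  \tr (rot01_23 u v *m rot02_13 w t) = (cos u + cos v) * (cos w + cos t).
Proof.
rewrite /mxtrace !big_ord_recl big_ord0 /= !mxE !big_ord_recl !big_ord0 /= !mxE /=.
ring.
Qed.

Definition torus_pt t : 'M[R]_4 := rot01_23 (4 * t) (5 * t) *m rot02_13 t (3 * t).

Definition torus_shift s x : 'M[R]_4 := rot01_23 (4 * s) (5 * s) *m x *m rot02_13 s (3 * s).

Lemma torus_pt0 : torus_pt 0 = 1%:M.
Proof. by rewrite /torus_pt !mulr0 rot01_23_0 rot02_13_0 mulmx1. Qed.

Lemma torus_pt_SO t : inSO (torus_pt t).
Proof. exact: inSO_mul (rot01_23_SO _ _) (rot02_13_SO _ _). Qed.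

Lemma torus_shift_pt s t : torus_shift s (torus_pt t) = torus_pt (s + t).
Proof.
rewrite /torus_shift /torus_pt !mulmxA rot01_23M -mulmxA rot02_13M.
by congr (rot01_23 _ _ *m rot02_13 _ _); ring.
Qed.

Lemma isometry_torus_shift s : isometry_SO (torus_shift s).
Proof. by apply: isometry_SO_mulmx; [exact: rot01_23_SO | exact: rot02_13_SO]. Qed.

Lemma frob_torus_shift s x y : frob (torus_shift s x) (torus_shift s y) = frob x y.
Proof. by apply: frob_mulmx_SO; [exact: rot01_23_SO | exact: rot02_13_SO]. Qed.

Lemma frob_torus_pt s t : frob (torus_pt s) (torus_pt t) =
  (cos (4 * (t - s)) + cos (5 * (t - s))) * (cos (t - s) + cos (3 * (t - s))).
Proof.
have -> : torus_pt s = torus_shift s (torus_pt 0) by rewrite torus_shift_pt addr0.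
have -> : torus_pt t = torus_shift s (torus_pt (t - s)).
  by rewrite torus_shift_pt; congr torus_pt; ring.
by rewrite frob_torus_shift torus_pt0 frob1 mxtrace_rot01_23_rot02_13.
Qed.

Lemma sin_mul_sum_cos h m :
  2 * sin h * \sum_(0 <= k < m) cos (2 * k.+1%:R * h) = sin ((2 * m%:R + 1) * h) - sin h.
Proof.
elim: m => [|m IHm]; first by rewrite big_geq // mulr0 mulr0n mulr0 add0r mul1r subrr.
rewrite big_nat_recr //= mulrDr IHm.
have -> : (2 * m.+1%:R + 1) * h = 2 * m.+1%:R * h + h by ring.
have -> : (2 * m%:R + 1) * h = 2 * m.+1%:R * h - h by ring.
rewrite sinB sinD; ring.
Qed.

Lemma cos_torus_product h : sin (17 * h) = 0 -> sin h != 0 ->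
  (cos (4 * (2 * h)) + cos (5 * (2 * h))) * (cos (2 * h) + cos (3 * (2 * h))) = - 4^-1.
Proof.
move=> s17 s1.
have cosM u v : cos u * cos v = (cos (u + v) + cos (u - v)) / 2.
  by rewrite cosD cosB; field.
have sum8 : \sum_(0 <= k < 8) cos (2 * k.+1%:R * h) = - 2^-1.
  have := sin_mul_sum_cos h 8.
  rewrite (_ : (2 * 8%:R + 1) * h = 17 * h) ?s17; last by ring.
  have two_s1 : 2 * sin h != 0 by rewrite mulf_neq0 // pnatr_eq0.
  by move=> e; apply: (mulfI two_s1); rewrite e; field.
have p1 : cos (4 * (2 * h)) * cos (2 * h) = (cos (2 * 5%:R * h) + cos (2 * 3%:R * h)) / 2.
  by rewrite cosM; congr ((cos _ + cos _) / 2); ring.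
have p2 : cos (4 * (2 * h)) * cos (3 * (2 * h)) = (cos (2 * 7%:R * h) + cos (2 * 1%:R * h)) / 2.
  by rewrite cosM; congr ((cos _ + cos _) / 2); ring.
have p3 : cos (5 * (2 * h)) * cos (2 * h) = (cos (2 * 6%:R * h) + cos (2 * 4%:R * h)) / 2.
  by rewrite cosM; congr ((cos _ + cos _) / 2); ring.
have p4 : cos (5 * (2 * h)) * cos (3 * (2 * h)) = (cos (2 * 8%:R * h) + cos (2 * 2%:R * h)) / 2.
  by rewrite cosM; congr ((cos _ + cos _) / 2); ring.
rewrite !big_nat_recr // big_geq //= in sum8.
rewrite mulrDl !mulrDr p1 p2 p3 p4; lra.
Qed.

End TorusCode.

Section Code17.
Variable R : realType.

Definition code_pt (k : nat) : 'M[R]_4 := torus_pt (k%:R * (2 * pi / 17)).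

Definition code17 : seq 'M[R]_4 := map code_pt (iota 0 17).

Lemma sin_natmul_pi (m : nat) : sin (m%:R * pi) = 0 :> R.
Proof.
have := alternatingn (@sinDpi R) m 0; rewrite add0r sin0 mulr0 => <-.
by rewrite mulr_natl.
Qed.

Lemma sin_natmul_pi17_neq0 (m : nat) : (0 < m < 17)%N -> sin (m%:R * (pi / 17)) != 0 :> R.
Proof.
case/andP=> m_gt0 m_lt17; apply: lt0r_neq0; apply: sin_gt0_pi.
have pi_gt0 := @pi_gt0 R.
have m_le16 : (m%:R : R) <= 16 by rewrite (_ : 16 = 16%:R :> R) // ler_nat -ltnS.
have m_ge1 : (1 : R) <= m%:R by rewrite ler1n.
apply/andP; split; nra.
Qed.

Lemma frob_code_pt j k : (j < k < 17)%N -> frob (code_pt j) (code_pt k) = - 4^-1.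
Proof.
case/andP=> jk k17; rewrite frob_torus_pt.
have -> : k%:R * (2 * pi / 17) - j%:R * (2 * pi / 17) = 2 * ((k - j)%:R * (pi / 17)) :> R.
  by rewrite natrB ?(ltnW jk) //; ring.
apply: cos_torus_product; last by apply: sin_natmul_pi17_neq0; rewrite subn_gt0 jk; lia.
rewrite (_ : 17 * ((k - j)%:R * (pi / 17)) = (k - j)%:R * pi) ?sin_natmul_pi //; field; done.
Qed.

Lemma code_pt_chordal2 j k : (j < 17)%N -> (k < 17)%N -> j != k ->
  chordal2 (code_pt j) (code_pt k) = 17 / 2.
Proof.
move=> j17 k17 jk.
rewrite chordal2_frob !frob_SO; try exact: torus_pt_SO.
case: (ltngtP j k) => [lt_jk|lt_kj|eq_jk]; last by rewrite eq_jk eqxx in jk.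
  by rewrite frob_code_pt ?lt_jk //; field.
by rewrite frobC frob_code_pt ?lt_kj //; field.
Qed.

Lemma cos_addn2pi u (q : nat) : cos (u + q%:R * (2 * pi)) = cos u :> R.
Proof.
rewrite (_ : q%:R * (2 * pi) = pi *+ 2 *+ q); first exact: (periodicn (@cosD2pi R)).
by rewrite -mulrnA -[pi *+ (2 * q)]mulr_natl natrM; ring.
Qed.

Lemma sin_addn2pi u (q : nat) : sin (u + q%:R * (2 * pi)) = sin u :> R.
Proof.
rewrite (_ : q%:R * (2 * pi) = pi *+ 2 *+ q); first exact: (periodicn (@sinD2pi R)).
by rewrite -mulrnA -[pi *+ (2 * q)]mulr_natl natrM; ring.
Qed.

Lemma torus_pt_addn2pi t (q : nat) : torus_pt (t + q%:R * (2 * pi)) = torus_pt t :> 'M[R]_4.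
Proof.
have mulq (c : nat) : c%:R * (t + q%:R * (2 * pi)) = c%:R * t + (c * q)%:R * (2 * pi).
  by rewrite natrM; ring.
rewrite /torus_pt (mulq 4%N) (mulq 5%N) (mulq 3%N) -[t + _]mul1r (mulq 1%N) mul1r.
by rewrite /rot01_23 /rot02_13 !cos_addn2pi !sin_addn2pi.
Qed.

Lemma code_pt_mod k : code_pt k = code_pt (k %% 17).
Proof.
rewrite /code_pt -[torus_pt ((k %% 17)%:R * _)](torus_pt_addn2pi _ (k %/ 17)).
rewrite {1}(divn_eq k 17).
by congr torus_pt; rewrite natrD natrM; field.
Qed.

Lemma torus_shift_code_pt s k :
  torus_shift (s%:R * (2 * pi / 17)) (code_pt k) = code_pt ((k + s) %% 17).
Proof. by rewrite -code_pt_mod /code_pt torus_shift_pt natrD; congr torus_pt; ring. Qed.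

Lemma code17P x : reflect (exists2 k, (k < 17)%N & x = code_pt k) (x \in code17).
Proof.
apply: (iffP mapP) => -[k]; first by rewrite mem_iota => /andP[_ k17] ->; exists k.
by move=> k17 ->; exists k; rewrite // mem_iota.
Qed.

Lemma code17_SO x : x \in code17 -> inSO x.
Proof. by case/code17P => k _ ->; exact: torus_pt_SO. Qed.

Lemma code17_chordal2 x y : x \in code17 -> y \in code17 -> x != y -> chordal2 x y = 17 / 2.
Proof.
move=> /code17P[j j17 ->] /code17P[k k17 ->] jk.
by apply: code_pt_chordal2 => //; apply: contraNneq jk => ->.
Qed.

Lemma code17_uniq : uniq code17.
Proof.
rewrite map_inj_in_uniq ?iota_uniq // => j k; rewrite !mem_iota => /andP[_ j17] /andP[_ k17].
move=> jk; apply/eqP; apply: contraTT isT => /(code_pt_chordal2 _ _ j17 k17).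
by rewrite jk chordal2xx => /esym/eqP; rewrite mulf_eq0 invr_eq0 !pnatr_eq0.
Qed.

Lemma code17_symmetry s : symmetry code17 (torus_shift (s%:R * (2 * pi / 17))).
Proof.
split; first exact: isometry_torus_shift.
split=> [x /code17P[k _ ->]|y /code17P[k k17 ->]].
  by rewrite torus_shift_code_pt; apply/code17P; exists ((k + s) %% 17)%N; rewrite ?ltn_pmod.
set k' := ((k + (17 - s %% 17)) %% 17)%N.
exists (code_pt k'); first by apply/code17P; exists k'; rewrite ?ltn_pmod.
by rewrite torus_shift_code_pt; congr code_pt; rewrite /k'; lia.
Qed.

Lemma code17_transitive : transitive_symmetry code17.
Proof.
move=> x y /code17P[i i17 ->] /code17P[j j17 ->].
exists (torus_shift ((j + (17 - i))%:R * (2 * pi / 17))); split; first exact: code17_symmetry.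
by rewrite torus_shift_code_pt; congr code_pt; lia.
Qed.

End Code17.

Theorem theorem8p1 (R : realType) :
  (exists C : seq 'M[R]_4,
      [/\ is_code C, size C = 17%N, regular_simplex C,
          universally_optimal C & transitive_symmetry C]) /\
  (forall C : seq 'M[R]_4, is_code C -> regular_simplex C -> (size C <= 17)%N).
Proof.
split; last by move=> C [uC _]; exact: regular_simplex_size_le.
have size_code17 : size (code17 R) = 17%N by rewrite size_map size_iota.
exists (code17 R); split => //.
- by split; [exact: code17_uniq | exact: code17_SO].
- by exists (Num.sqrt (17 / 2)) => x y xC yC xy; rewrite /chordal code17_chordal2.
- apply: (@regular_simplex_universally_optimal _ _ _ (17 / 2)).
  + exact: code17_uniq.
  + by rewrite divr_gt0 ?ltr0n.
  + by rewrite size_code17 /=; field.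
  + exact: code17_chordal2.
- exact: code17_transitive.
Qed.
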